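(* Let $\mathbb{Z}\langle w_1,w_2,\ldots\rangle$ be the free associative algebra over $\mathbb{Z}$ on generators $w_n$ of degree $2n$, with the graded Hopf algebra structure given by $\Delta w_n=\sum_{k=0}^n\binom{n}{k}w_k\otimes w_{n-k}$ (where $w_0=1$), and let $\mathbb{Z}\langle \xi_1,\xi_2,\ldots\rangle$ be the free associative algebra over $\mathbb{Z}$ on generators $\xi_n$ of degree $2n$, with the graded Hopf algebra structure given by $\Delta\xi_n=1\otimes\xi_n+\xi_n\otimes1$. Then these two graded Hopf algebras are isomorphic over $\mathbb{Z}$. *)

From HB Require Import structures.
From mathcomp Require Import all_boot all_algebra.
From mathcomp Require Import finmap monalg.
Set Implicit Arguments. Unset Strict Implicit. Unset Printing Implicit Defensive.
Import GRing.Theory.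
Local Open Scope ring_scope.

(* Product of two monoids (componentwise), used to build the tensor square:
   Z[M1] (x) Z[M2] = Z[M1 x M2] as rings. *)
Definition mprod (M1 M2 : monomType) := (M1 * M2)%type.
HB.instance Definition _ (M1 M2 : monomType) := Choice.on (mprod M1 M2).

Section MProd.
Variables M1 M2 : monomType.
Definition mprod_one : mprod M1 M2 := (mone, mone).
Definition mprod_mul (x y : mprod M1 M2) : mprod M1 M2 :=
  (mmul x.1 y.1, mmul x.2 y.2).
Lemma mprod_mulA : associative mprod_mul.
Proof. by move=> [a b] [c d] [e f]; rewrite /mprod_mul /= !mulmA. Qed.
Lemma mprod_mul1m : left_id mprod_one mprod_mul.
Proof. by move=> [a b]; rewrite /mprod_mul /= !mul1m. Qed.
Lemma mprod_mulm1 : right_id mprod_one mprod_mul.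
Proof. by move=> [a b]; rewrite /mprod_mul /= !mulm1. Qed.
Lemma mprod_unitm (x y : mprod M1 M2) :
  mprod_mul x y = mprod_one -> x = mprod_one /\ y = mprod_one.
Proof.
case: x y => [a b] [c d]; rewrite /mprod_mul /mprod_one => -[].
by move=> /unitm[-> ->] /unitm[-> ->].
Qed.
HB.instance Definition _ := Choice_isMonomialDef.Build (mprod M1 M2)
  mprod_mulA mprod_mul1m mprod_mulm1 mprod_unitm.
End MProd.

(* Words in the letters 0,1,2,...; letter i stands for the generator of
   index i+1 (w_{i+1}, resp. xi_{i+1}). *)
Definition word := {fmonom nat}.

Definition FA := {malg int[word]}.
(* Its tensor square FA (x)_Z FA, as the monoid ring of word x word. *)
Definition FA2 := {malg int[mprod word word]}.

Definition X (i : nat) : FA := << fmu i >>.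

Definition tens (a b : FA) : FA2 :=
  \sum_(i <- msupp a) \sum_(j <- msupp b)
     << a@_i * b@_j *g ((i, j) : mprod word word) >>.

Definition tmap (f g : FA -> FA) (t : FA2) : FA2 :=
  \sum_(k <- msupp t) t@_k *: tens (f << k.1 >>) (g << k.2 >>).

Definition extw (h : nat -> FA2) (m : word) : FA2 :=
  \prod_(i <- fmonom_val m) h i.
Definition algext (h : nat -> FA2) (x : FA) : FA2 :=
  \sum_(k <- msupp x) x@_k *: extw h k.

Definition wgen (n : nat) : FA := if n is m.+1 then X m else 1.

Definition Dw_gen (i : nat) : FA2 :=
  \sum_(k < i.+2) ('C(i.+1, k))%:R * tens (wgen k) (wgen (i.+1 - k)).
Definition Dxi_gen (i : nat) : FA2 := tens 1 (X i) + tens (X i) 1.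

Definition DeltaW : FA -> FA2 := algext Dw_gen.
Definition DeltaXi : FA -> FA2 := algext Dxi_gen.

(* counit (the same for both): the constant coefficient *)
Definition eps (x : FA) : int := x@_(fmone nat).

Definition wt (m : word) : nat := \sum_(i <- fmonom_val m) (2 * i.+1)%N.
Definition homog (d : nat) (x : FA) : Prop :=
  forall m, m \in msupp x -> wt m = d.

(* Encode a sequence u_0, u_1, ... by its exponential generating function
U(t) = sum_n u_n t^n / n!.  The coproduct of the w_n says that W(t) (with w_0 = 1)
is grouplike, and the xi_n are primitive.  In Z<xi> let G(t) be the ordered
exponential of Xi(t) = sum_n xi_(n+1) t^n / n!, i.e. the solution of G' = G Xi
with G(0) = 1: its coefficients G_(n+1) = sum_k C(n,k) G_k xi_(n+1-k) are integral.
Since Xi(t) is primitive and the two tensor factors commute, the Leibniz rule shows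
that G(t) is grouplike, so w_n |-> G_n is a bialgebra map.  It preserves degrees,
and it is invertible because its inverse sends xi_(n+1) to the n-th coefficient of
the logarithmic derivative W^-1 W', which is again integral. *)

Set Warnings "-notation-overridden -ambiguous-paths -notation-incompatible-prefix -redundant-canonical-projection".
From HB Require Import structures.
From mathcomp Require Import all_boot all_algebra.
From mathcomp Require Import finmap monalg zify.
Import GRing.Theory.
Local Open Scope ring_scope.
Set Implicit Arguments. Unset Strict Implicit. Unset Printing Implicit Defensive.

Section CourseOfValues.
Variables (T : Type) (x0 : T) (step : nat -> (nat -> T) -> T).

Fixpoint cov_seq n : seq T :=
  if n is m.+1 then rcons (cov_seq m) (step m (nth x0 (cov_seq m))) else [::].

Definition cov_rec n : T := nth x0 (cov_seq n.+1) n.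

Lemma size_cov_seq n : size (cov_seq n) = n.
Proof. by elim: n => //= n IH; rewrite size_rcons IH. Qed.

Lemma nth_cov_seq n k : (k < n)%N -> nth x0 (cov_seq n) k = cov_rec k.
Proof.
elim: n => [//|n IH] lt_kn; rewrite /= nth_rcons size_cov_seq.
case: (ltngtP k n) => [lt_kn'|gt_kn|->]; first exact: IH.
  by rewrite ltnS leqNgt gt_kn in lt_kn.
by rewrite /cov_rec /= nth_rcons size_cov_seq ltnn eqxx.
Qed.

Hypothesis step_local :
  forall n p q, (forall k, (k < n)%N -> p k = q k) -> step n p = step n q.

Lemma cov_recE n : cov_rec n = step n cov_rec.
Proof.
rewrite /cov_rec /= nth_rcons size_cov_seq ltnn eqxx.
by apply: step_local => k; apply: nth_cov_seq.
Qed.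
End CourseOfValues.

Lemma commr_mulACA (R : pzRingType) (x y z t : R) :
  GRing.comm y z -> x * y * (z * t) = x * z * (y * t).
Proof. by move=> yz; rewrite -!mulrA (mulrA y) yz -mulrA. Qed.

(* [bconv a b] is the coefficient sequence of the product of the exponential
   generating functions of [a] and [b]. *)
Section BinomialConvolution.
Variable R : pzRingType.
Implicit Types a b c : nat -> R.

Definition bconv a b n : R := \sum_(0 <= k < n.+1) 'C(n, k)%:R * (a k * b (n - k)%N).

Lemma eq_bconv a a' b b' n :
    (forall k, (k <= n)%N -> a k = a' k) -> (forall k, (k <= n)%N -> b k = b' k) ->
  bconv a b n = bconv a' b' n.
Proof.
move=> eq_a eq_b; apply: eq_big_nat => k /andP[_ le_kn].
by rewrite eq_a // eq_b // leq_subr.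
Qed.

Lemma bconv0 a b : bconv a b 0 = a 0%N * b 0%N.
Proof. by rewrite /bconv big_nat1 mul1r. Qed.

Lemma bconv_recl a b n : bconv a b n =
  a 0%N * b n + \sum_(0 <= k < n) 'C(n, k.+1)%:R * (a k.+1 * b (n - k.+1)%N).
Proof. by rewrite /bconv big_nat_recl // bin0 subn0 mul1r. Qed.

Lemma bconvDl a b c n :
  bconv (fun k => a k + b k) c n = bconv a c n + bconv b c n.
Proof. by rewrite -big_split; apply: eq_bigr => k _; rewrite mulrDl mulrDr. Qed.

Lemma bconvDr a b c n :
  bconv a (fun k => b k + c k) n = bconv a b n + bconv a c n.
Proof. by rewrite -big_split; apply: eq_bigr => k _; rewrite !mulrDr. Qed.

(* The Leibniz rule (ab)' = a'b + ab'. *)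
Lemma bconvS a b n :
  bconv a b n.+1 = bconv (fun k => a k.+1) b n + bconv a (fun k => b k.+1) n.
Proof.
rewrite bconv_recl [bconv a _ n]bconv_recl addrCA; congr (_ + _).
rewrite [LHS](eq_bigr (fun k => 'C(n, k)%:R * (a k.+1 * b (n - k)%N)
   + 'C(n, k.+1)%:R * (a k.+1 * b (n - k)%N))); last first.
  by move=> k _; rewrite binS natrD mulrDl addrC subSS.
rewrite big_split /=; congr (_ + _).
rewrite big_nat_recr //= bin_small // mul0r addr0.
by apply: eq_big_nat => k /andP[_ lt_kn]; rewrite subnSK.
Qed.

Lemma bconvC a b n : (forall i j, a i * b j = b j * a i) ->
  bconv a b n = bconv b a n.
Proof.
move=> ab; rewrite /bconv big_nat_rev /=; apply: eq_big_nat => k /andP[_ lt_kn].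
by rewrite add0n subSS bin_sub // subKn // ab.
Qed.

Lemma bconvA a b c n : bconv (bconv a b) c n = bconv a (bconv b c) n.
Proof.
elim: n a b c => [|n IH] a b c; first by rewrite !bconv0 mulrA.
rewrite !bconvS (@eq_bconv (fun k => bconv a b k.+1)
  (fun k => bconv (fun i => a i.+1) b k + bconv a (fun i => b i.+1) k) c c) //;
  last by move=> k _; apply: bconvS.
rewrite (@eq_bconv a a (fun k => bconv b c k.+1)
  (fun k => bconv (fun i => b i.+1) c k + bconv b (fun i => c i.+1) k)) //;
  last by move=> k _; apply: bconvS.
by rewrite bconvDl bconvDr !IH addrA.
Qed.
End BinomialConvolution.

(* [exp_seq u p] is the differential equation U' = U P on generating functions;
   [oexp p] is its solution with U(0) = 1, and [logder u] the rate P = U^-1 U'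
   of a given [u] with U(0) = 1. *)
Section ExponentialSequences.
Variable R : pzRingType.
Implicit Types u v p q : nat -> R.

Definition exp_seq u p := forall n, u n.+1 = bconv u p n.

Lemma eq_exp_seq u v p q : u =1 v -> p =1 q -> exp_seq u p -> exp_seq v q.
Proof. by move=> uv pq Eu n; rewrite -uv Eu; apply: eq_bconv => k _. Qed.

Lemma exp_seq_uniq u v p : exp_seq u p -> exp_seq v p -> u 0%N = v 0%N -> u =1 v.
Proof.
move=> Eu Ev uv0 n; elim/ltn_ind: n => -[//|n] IH.
by rewrite Eu Ev; apply: eq_bconv => // k le_kn; apply: IH.
Qed.

Lemma exp_seq_uniq_rate u p q : u 0%N = 1 -> exp_seq u p -> exp_seq u q -> p =1 q.
Proof.
move=> u01 Ep Eq n; elim/ltn_ind: n => n IH.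
have := Ep n; rewrite Eq !bconv_recl u01 !mul1r => /esym.
rewrite (eq_big_nat _ _ (F2 := fun k => 'C(n, k.+1)%:R * (u k.+1 * q (n - k.+1)%N))).
  by move/addIr.
by move=> k /andP[_ lt_kn]; rewrite IH // ltn_subrL (leq_ltn_trans _ lt_kn).
Qed.

Lemma exp_seq_bconv u v p q : exp_seq u p -> exp_seq v q ->
    (forall i j, p i * v j = v j * p i) ->
  exp_seq (bconv u v) (fun k => p k + q k).
Proof.
move=> Eu Ev pv n; rewrite bconvS bconvDr; congr (_ + _).
  rewrite (@eq_bconv _ _ (bconv u p) v v) // !bconvA.
  by apply: eq_bconv => // k _; apply: bconvC.
by rewrite bconvA; apply: eq_bconv.
Qed.

Definition oexp p : nat -> R :=
  cov_rec 0 (fun n u => if n is m.+1 then bconv u p m else 1).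

Lemma oexp_step_local p n u v : (forall k, (k < n)%N -> u k = v k) ->
  (if n is m.+1 then bconv u p m else 1) = (if n is m.+1 then bconv v p m else 1).
Proof. by case: n => // m uv; apply: eq_bconv => // k le_km; apply: uv. Qed.

Lemma oexp0 p : oexp p 0%N = 1.
Proof. by rewrite /oexp (cov_recE _ (@oexp_step_local p)). Qed.

Lemma exp_seq_oexp p : exp_seq (oexp p) p.
Proof. by move=> n; rewrite /oexp (cov_recE _ (@oexp_step_local p)). Qed.

Definition logder u : nat -> R := cov_rec 0 (fun n q =>
  u n.+1 - \sum_(0 <= k < n) 'C(n, k.+1)%:R * (u k.+1 * q (n - k.+1)%N)).

Lemma exp_seq_logder u : u 0%N = 1 -> exp_seq u (logder u).
Proof.
move=> u01 n; rewrite bconv_recl u01 mul1r [logder u n]cov_recE ?subrK //.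
move=> {}n q q' qq'; congr (_ - _); apply: eq_big_nat => k /andP[_ lt_kn].
by rewrite qq' // ltn_subrL (leq_ltn_trans _ lt_kn).
Qed.
End ExponentialSequences.

Section MorphismImage.
Variables (R S : pzRingType) (phi : {rmorphism R -> S}).

Lemma rmorph_bconv a b n : phi (bconv a b n) = bconv (phi \o a) (phi \o b) n.
Proof. by rewrite rmorph_sum; apply: eq_bigr => k _; rewrite !rmorphM rmorph_nat. Qed.

Lemma rmorph_exp_seq u p : exp_seq u p -> exp_seq (phi \o u) (phi \o p).
Proof. by move=> Eu n /=; rewrite Eu rmorph_bconv. Qed.
End MorphismImage.

Lemma malgUE (K : monomType) (c : int) (k : K) :
  << c *g k >> = c%:~R * << k >> :> {malg int[K]}.
Proof. by rewrite mulrzl -raddfMz intz. Qed.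

Lemma malgUM (K : monomType) (k l : K) :
  << mmul k l >> = << k >> * << l >> :> {malg int[K]}.
Proof. by rewrite malgM_def fgmulUU mulr1. Qed.

Lemma mprod_mulE (M1 M2 : monomType) (a b : mprod M1 M2) :
  mmul a b = (mmul a.1 b.1, mmul a.2 b.2).
Proof. by []. Qed.

Section MalgEval.
Context {K : monomType} {T : nzRingType} (h : {mmorphism K -> T}).

Definition malg_eval : {malg int[K]} -> T := mmap intr h.

HB.instance Definition _ := GRing.Additive.copy malg_eval (mmap intr h).

Lemma malg_eval_is_monoid_morphism : monoid_morphism malg_eval.
Proof.
have [evalM eval1] := commr_mmap_is_multiplicative (f := intr) (h := h)
  (fun c m m' => commr_sym (commr_int _ _)).
by split.
Qed.

HB.instance Definition _ := GRing.isMonoidMorphism.Build {malg int[K]} T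
  malg_eval malg_eval_is_monoid_morphism.

Lemma malg_evalU c k : malg_eval << c *g k >> = c%:~R * h k.
Proof. exact: mmapU. Qed.

Lemma malg_evalE x : malg_eval x = \sum_(k <- msupp x) (x@_k)%:~R * h k.
Proof. exact: mmapE. Qed.
End MalgEval.

Section FreeEval.
Context {T : nzRingType} (g : nat -> T).

Definition word_eval (m : word) : T := \prod_(i <- fmonom_val m) g i.

Lemma word_eval_is_mmorphism : mmorphism word_eval.
Proof.
split; last by rewrite /word_eval fm1 big_nil.
by move=> a b; rewrite /word_eval fmM big_cat.
Qed.

HB.instance Definition _ := isMultiplicative.Build word T word_eval
  word_eval_is_mmorphism.

Definition free_eval : FA -> T := malg_eval word_eval.
HB.instance Definition _ := GRing.RMorphism.copy free_eval (malg_eval word_eval).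

Lemma free_evalX i : free_eval (X i) = g i.
Proof. by rewrite /free_eval /X malg_evalU /= /word_eval fmU big_seq1 mul1r. Qed.
End FreeEval.

Lemma algext_free_eval (h : nat -> FA2) : algext h =1 free_eval h.
Proof.
move=> x; rewrite /algext /free_eval malg_evalE; apply: eq_bigr => k _.
by rewrite mulrzl -[in LHS](intz (x@_k)) scaler_int.
Qed.

Lemma word_prodX (k : word) : << k >> = \prod_(i <- fmonom_val k) X i :> FA.
Proof.
case: k => s; elim: s => [|i s IH]; first by rewrite big_nil -fm1 fmK.
have -> : FMonom (i :: s) = mmul (fmu i) (FMonom s).
  by apply: val_inj; rewrite /= fmM fmU.
by rewrite fmM fmU big_cons -IH malgUM.
Qed.

Lemma free_rmorph_eq (T : nzRingType) (phi psi : {rmorphism FA -> T}) :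
  (forall i, phi (X i) = psi (X i)) -> phi =1 psi.
Proof.
move=> E x; rewrite (monalgE x) !rmorph_sum; apply: eq_bigr => k _.
rewrite malgUE !rmorphM !rmorph_int word_prodX !rmorph_prod.
by congr (_ * _); apply: eq_bigr.
Qed.

Local Notation P2 := (mprod word word).

Definition monom_l (k : word) : FA2 := << ((k, mone) : P2) >>.
Definition monom_r (k : word) : FA2 := << ((mone, k) : P2) >>.

Lemma monom_l_is_mmorphism : mmorphism monom_l.
Proof. by split=> [a b|//]; rewrite /monom_l -malgUM mprod_mulE /= mulm1. Qed.

Lemma monom_r_is_mmorphism : mmorphism monom_r.
Proof. by split=> [a b|//]; rewrite /monom_r -malgUM mprod_mulE /= mulm1. Qed.

HB.instance Definition _ := isMultiplicative.Build word FA2 monom_l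
  monom_l_is_mmorphism.
HB.instance Definition _ := isMultiplicative.Build word FA2 monom_r
  monom_r_is_mmorphism.

Definition tens_l : FA -> FA2 := malg_eval monom_l.
Definition tens_r : FA -> FA2 := malg_eval monom_r.
HB.instance Definition _ := GRing.RMorphism.copy tens_l (malg_eval monom_l).
HB.instance Definition _ := GRing.RMorphism.copy tens_r (malg_eval monom_r).

Lemma tens_lE a : tens_l a = \sum_(k <- msupp a) << a@_k *g ((k, mone) : P2) >>.
Proof. by rewrite [LHS]malg_evalE; apply: eq_bigr => k _; rewrite malgUE. Qed.

Lemma tens_rE b : tens_r b = \sum_(k <- msupp b) << b@_k *g ((mone, k) : P2) >>.
Proof. by rewrite [LHS]malg_evalE; apply: eq_bigr => k _; rewrite malgUE. Qed.

Lemma tens_lr (a b : FA) : tens a b = tens_l a * tens_r b.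
Proof.
rewrite tens_lE tens_rE mulr_suml; apply: eq_bigr => i _.
rewrite mulr_sumr; apply: eq_bigr => j _.
by rewrite malgM_def fgmulUU mprod_mulE mulm1 mul1m.
Qed.

Lemma tens_rl (a b : FA) : tens a b = tens_r b * tens_l a.
Proof.
rewrite tens_lE tens_rE mulr_sumr; apply: eq_bigr => i _.
rewrite mulr_suml; apply: eq_bigr => j _.
by rewrite malgM_def fgmulUU mprod_mulE mulm1 mul1m mulrC.
Qed.

(* Rewrites on FA2 below use explicitly instantiated lemmas: a failed conversion
   between distinct elements of FA2 unfolds the monoid-algebra product and
   practically never terminates. *)
Lemma tens_l_r_comm (a b : FA) : tens_l a * tens_r b = tens_r b * tens_l a.
Proof. exact: etrans (esym (tens_lr a b)) (tens_rl a b). Qed.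

Lemma tensM (a b c d : FA) : tens a b * tens c d = tens (a * c) (b * d).
Proof.
rewrite (tens_lr a b) (tens_lr c d) (tens_lr (a * c)).
rewrite commr_mulACA; last exact/esym/tens_l_r_comm.
by congr (_ * _); apply/esym/rmorphM.
Qed.

Lemma tens_l1 (a : FA) : tens a 1 = tens_l a.
Proof. by rewrite tens_lr rmorph1 mulr1. Qed.

Lemma tens_1r (b : FA) : tens 1 b = tens_r b.
Proof. by rewrite tens_lr rmorph1 mul1r. Qed.

Section TensorMap.
Variables f g : {rmorphism FA -> FA}.

Definition tens_monom (k : P2) : FA2 := tens (f << k.1 >>) (g << k.2 >>).

Lemma tens_monom_is_mmorphism : mmorphism tens_monom.
Proof.
split=> [[a1 a2] [b1 b2]|]; last by rewrite /tens_monom !rmorph1 tens_l1 rmorph1.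
by rewrite /tens_monom mprod_mulE /= !malgUM (rmorphM f) (rmorphM g) tensM.
Qed.

HB.instance Definition _ := isMultiplicative.Build P2 FA2 tens_monom
  tens_monom_is_mmorphism.

Lemma tmapE t : tmap f g t = malg_eval tens_monom t.
Proof.
rewrite /tmap malg_evalE; apply: eq_bigr => k _.
by rewrite mulrzl -[in LHS](intz (t@_k)) scaler_int.
Qed.

Lemma tmap_tens a b : tmap f g (tens a b) = tens (f a) (g b).
Proof.
have evalU k : malg_eval tens_monom << k >> = tens_monom k.
  by rewrite malg_evalU mul1r.
have left_eq : malg_eval tens_monom \o tens_l =1 tens_l \o f.
  apply: free_rmorph_eq => i /=.
  by rewrite [tens_l (X i)]malg_evalU mul1r evalU /tens_monom /= rmorph1 tens_l1.
have right_eq : malg_eval tens_monom \o tens_r =1 tens_r \o g.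
  apply: free_rmorph_eq => i /=.
  by rewrite [tens_r (X i)]malg_evalU mul1r evalU /tens_monom /= rmorph1 tens_1r.
rewrite tmapE (tens_lr a) (tens_lr (f a)) (rmorphM (malg_eval tens_monom)).
by congr (_ * _); [exact: left_eq | exact: right_eq].
Qed.
End TensorMap.

Lemma wtM (a b : word) : wt (mmul a b) = (wt a + wt b)%N.
Proof. by rewrite /wt fmM big_cat. Qed.

Lemma wt1 : wt mone = 0%N.
Proof. by rewrite /wt fm1 big_nil. Qed.

Lemma homogD d x y : homog d x -> homog d y -> homog d (x + y).
Proof.
move=> hx hy m /(fsubsetP (msuppD_le x y)); rewrite in_fsetU => /orP[].
  exact: hx.
exact: hy.
Qed.

Lemma homog_sum (d : nat) (I : eqType) (s : seq I) (F : I -> FA) :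
  (forall i, i \in s -> homog d (F i)) -> homog d (\sum_(i <- s) F i).
Proof.
elim: s => [|a s IH] hF; first by rewrite big_nil => m; rewrite msupp0 in_fset0.
rewrite big_cons; apply: homogD; first by apply: hF; rewrite mem_head.
by apply: IH => i si; apply: hF; rewrite in_cons si orbT.
Qed.

Lemma homogM a b x y : homog a x -> homog b y -> homog (a + b) (x * y).
Proof.
move=> hx hy m /msuppM_le [k1 [k2 [k1x k2y ->]]].
by rewrite wtM (hx _ k1x) (hy _ k2y).
Qed.

Lemma homogU c k : homog (wt k) << c *g k >>.
Proof. by move=> m /(fsubsetP msuppU_le); rewrite in_fset1 => /eqP ->. Qed.

Lemma homog_int (c : int) : homog 0 (c%:~R : FA).
Proof. by rewrite -[c%:~R]mulr1 -malgUE -wt1; apply: homogU. Qed.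

Lemma homog1 : homog 0 (1 : FA).
Proof. by rewrite -wt1; apply: homogU. Qed.

Lemma homogX i : homog (2 * i.+1) (X i).
Proof. by have := @homogU 1 (fmu i); rewrite /wt fmU big_seq1. Qed.

Lemma homog_word_eval (g : nat -> FA) : (forall i, homog (2 * i.+1) (g i)) ->
  forall k, homog (wt k) (word_eval g k).
Proof.
move=> hg [s]; rewrite /wt /word_eval /=.
elim: s => [|i s IH]; first by rewrite !big_nil; apply: homog1.
by rewrite !big_cons; apply: homogM.
Qed.

Lemma homog_free_eval (g : nat -> FA) : (forall i, homog (2 * i.+1) (g i)) ->
  forall d x, homog d x -> homog d (free_eval g x).
Proof.
move=> hg d x hx; rewrite [free_eval g x]malg_evalE; apply: homog_sum => k kx.
rewrite -(hx k kx) -[wt k]add0n.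
by apply: homogM; [apply: homog_int | apply: homog_word_eval].
Qed.

Lemma homog_oexp n : homog (2 * n) (oexp X n).
Proof.
elim/ltn_ind: n => -[_|n IH]; first by rewrite oexp0; apply: homog1.
rewrite exp_seq_oexp; apply: homog_sum => k; rewrite mem_index_iota => /andP[_ lt_kn].
have -> : (2 * n.+1 = 0 + (2 * k + 2 * (n - k).+1))%N by lia.
apply: homogM; first by rewrite pmulrn; apply: homog_int.
by apply: homogM; [apply: IH | apply: homogX].
Qed.

Definition hopf_iso : FA -> FA := free_eval (fun i => oexp X i.+1).
Definition hopf_iso_inv : FA -> FA := free_eval (logder wgen).
HB.instance Definition _ :=
  GRing.RMorphism.copy hopf_iso (free_eval (fun i => oexp X i.+1)).
HB.instance Definition _ :=
  GRing.RMorphism.copy hopf_iso_inv (free_eval (logder wgen)).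

Lemma hopf_isoX i : hopf_iso (X i) = oexp X i.+1.
Proof. exact: free_evalX. Qed.

Lemma hopf_iso_invX i : hopf_iso_inv (X i) = logder wgen i.
Proof. exact: free_evalX. Qed.

Lemma hopf_iso_wgen n : hopf_iso (wgen n) = oexp X n.
Proof. by case: n => [|n]; [rewrite rmorph1 oexp0 | apply: hopf_isoX]. Qed.

Lemma exp_seq_wgen : exp_seq wgen (logder wgen).
Proof. exact: exp_seq_logder. Qed.

Lemma hopf_iso_inv_oexp n : hopf_iso_inv (oexp X n) = wgen n.
Proof.
have E : exp_seq (hopf_iso_inv \o oexp X) (logder wgen).
  exact: eq_exp_seq (frefl _) hopf_iso_invX
    (rmorph_exp_seq hopf_iso_inv (exp_seq_oexp X)).
by apply: (exp_seq_uniq E exp_seq_wgen); rewrite /= oexp0 rmorph1.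
Qed.

Lemma hopf_iso_logder n : hopf_iso (logder wgen n) = X n.
Proof.
have E : exp_seq (oexp X) (hopf_iso \o logder wgen).
  exact: eq_exp_seq hopf_iso_wgen (frefl _) (rmorph_exp_seq hopf_iso exp_seq_wgen).
exact: exp_seq_uniq_rate (oexp0 X) E (exp_seq_oexp X) n.
Qed.

Lemma hopf_iso_bij : bijective hopf_iso.
Proof.
exists hopf_iso_inv.
  apply: (@free_rmorph_eq _ (hopf_iso_inv \o hopf_iso) idfun) => i /=.
  by rewrite hopf_isoX hopf_iso_inv_oexp.
apply: (@free_rmorph_eq _ (hopf_iso \o hopf_iso_inv) idfun) => i /=.
by rewrite hopf_iso_invX hopf_iso_logder.
Qed.

Lemma homog_hopf_iso d x : homog d x -> homog d (hopf_iso x).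
Proof. by apply: homog_free_eval => i; apply: homog_oexp. Qed.

Lemma DeltaXi_oexp n :
  DeltaXi (oexp X n) = bconv (tens_l \o oexp X) (tens_r \o oexp X) n.
Proof.
rewrite /DeltaXi algext_free_eval; move: n; apply: exp_seq_uniq.
- apply: eq_exp_seq (frefl _) _ (rmorph_exp_seq _ (exp_seq_oexp X)) => i /=.
  by rewrite free_evalX /Dxi_gen tens_1r tens_l1 addrC.
- apply: exp_seq_bconv; try exact: rmorph_exp_seq (exp_seq_oexp X).
  by move=> i j; apply: tens_l_r_comm.
- by rewrite /= bconv0 /= oexp0 !rmorph1 mulr1.
Qed.

Lemma hopf_iso_coproduct x :
  DeltaXi (hopf_iso x) = tmap hopf_iso hopf_iso (DeltaW x).
Proof.
rewrite /DeltaXi /DeltaW !algext_free_eval tmapE; move: x.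
apply: (@free_rmorph_eq _ (free_eval Dxi_gen \o hopf_iso)
  (malg_eval (tens_monom hopf_iso hopf_iso) \o free_eval Dw_gen)) => i /=.
rewrite hopf_isoX -algext_free_eval -/DeltaXi DeltaXi_oexp free_evalX /Dw_gen.
rewrite [RHS]rmorph_sum /bconv big_mkord; apply: eq_bigr => k _.
rewrite [RHS]rmorphM (rmorph_nat (malg_eval _)) /= -tmapE tmap_tens /= !hopf_iso_wgen.
by rewrite -tens_lr.
Qed.

Lemma eps_X i : eps (X i) = 0.
Proof. by rewrite /eps /X mcoeffU1 (fm1_eq1 i). Qed.

Lemma hopf_iso_counit x : eps (hopf_iso x) = eps x.
Proof.
have epsX j : (X j)@_mone = 0 := eps_X j.
apply: (@free_rmorph_eq _ (mcoeff mone \o hopf_iso) (mcoeff mone)) => i /=.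
rewrite hopf_isoX exp_seq_oexp rmorph_bconv epsX.
by apply: big1 => k _; rewrite /= epsX !mulr0.
Qed.

Theorem mainTheorem11 :
  exists f : FA -> FA,
    [/\ (forall x y, f (x + y) = f x + f y),
        (forall x y, f (x * y) = f x * f y) /\ f 1 = 1,
        bijective f,
        (forall (d : nat) x, homog d x -> homog d (f x)) &
        (forall x, DeltaXi (f x) = tmap f f (DeltaW x)) /\
        (forall x, eps (f x) = eps x)].
Proof.
exists hopf_iso; split.
- exact: rmorphD.
- by split; [exact: rmorphM | exact: rmorph1].
- exact: hopf_iso_bij.
- exact: homog_hopf_iso.
- by split; [exact: hopf_iso_coproduct | exact: hopf_iso_counit].
Qed.
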